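(* Let $\Sigma$ be an alphabet with $|\Sigma|\geq 3$, let $\#\notin\Sigma$, and let $T,T'$ be strings over $\Sigma\cup\{\#\}$ with $d_H(T,T')=1$, where the differing position $i\in[0,|T|)$ satisfies $T[i]\neq T'[i]=\#$. Let $P$ be a periodic string of length $m$ such that $|\mathsf{occ}_T(P)|-|\mathsf{occ}_{T'}(P)|=y>0$, and suppose $\#$ occurs exactly once in $T'[i-m+1\mathinner{.\,.}i+m-1]$. Then there is a letter $c\in\Sigma$ such that the string $T''$ obtained from $T'$ by replacing $T'[i]$ with $c$ satisfies $|\mathsf{occ}_{T''}(P)|\leq|\mathsf{occ}_{T'}(P)|$.
   Context: $\mathsf{occ}_T(P)$ is the set of starting positions of occurrences of $P$ in $T$; $d_H$ is the Hamming distance. An integer $p>0$ is a period of $P$ if $P[t]=P[t+p]$ for all $t\in[0,|P|-p)$; $\mathsf{per}(P)$ is the smallest period; $P$ is periodic if $\mathsf{per}(P)\leq|P|/2$. The fragment $T'[i-m+1\mathinner{.\,.}i+m-1]$ is understood as clipped to the positions of $T'$. *)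

(* Strings over Sigma ∪ {#} are seq (option Sigma), with # = None. *)
From mathcomp Require Import all_boot.
Set Implicit Arguments. Unset Strict Implicit. Unset Printing Implicit Defensive.

Section Strings.
Variable S : finType.
Notation str := (seq (option S)).

Definition at_ (X : str) (t : nat) : option S := nth None X t.

Definition dH (X Y : str) : nat :=
  count (fun t => at_ X t != at_ Y t) (iota 0 (maxn (size X) (size Y))).

Definition occ (X P : str) : seq nat :=
  [seq j <- iota 0 (size X).+1 |
     (j + size P <= size X) && (take (size P) (drop j X) == P)].

Definition is_period (P : str) (p : nat) : bool :=
  (0 < p) && all (fun t => at_ P t == at_ P (t + p)) (iota 0 (size P - p)).

Lemma exists_period (P : str) : exists p, is_period P p.
Proof.
exists (size P).+1; rewrite /is_period /=.
by have -> : size P - (size P).+1 = 0 by apply/eqP; rewrite subn_eq0 leqnSn.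
Qed.

Definition per (P : str) : nat := ex_minn (exists_period P).

Definition periodic (P : str) : bool := per P <= (size P)./2.

(* clipped fragment X[i-m+1 .. i+m-1] *)
Definition window (X : str) (i m : nat) : str :=
  drop (i.+1 - m) (take (i + m) X).

End Strings.

(** Choose [c] different from the letters of [T'] at distance [p = per P] on
    both sides of [i]. An occurrence of [P] in [T''] covering [i] would place
    [c] at some offset [k] of [P]; since [2p <= |P|], one of [k - p], [k + p]
    is still an offset of [P], and periodicity then forces [c] to equal the
    letter of [T'] at [i - p] or at [i + p]. Hence every occurrence of [P] in
    [T''] avoids [i] and is already an occurrence in [T'], so
    [occ T'' P] is contained in [occ T' P]. *)
From mathcomp Require Import all_boot.
From mathcomp Require Import zify.

Set Implicit Arguments.
Unset Strict Implicit.
Unset Printing Implicit Defensive.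

Section Occurrences.
Variable S : finType.
Notation str := (seq (option S)).
Implicit Types (X P : str) (a : option S).

Definition occurs_at X P (j : nat) : bool :=
  (j + size P <= size X) && (take (size P) (drop j X) == P).

Lemma occurs_atP X P j :
  reflect (j + size P <= size X /\
           forall t, t < size P -> at_ X (j + t) = at_ P t)
          (occurs_at X P j).
Proof.
apply: (iffP andP) => [[hs /eqP e]|[hs h]]; split=> //.
  by move=> t ht; rewrite -e /at_ nth_take // nth_drop.
have hsP : size P <= size (drop j X) by rewrite size_drop; lia.
apply/eqP/(@eq_from_nth _ None) => [|t]; rewrite size_takel // => ht.
by rewrite nth_take // nth_drop; apply: h.
Qed.

Lemma size_occ_le X Y P :
  size X = size Y -> (forall j, occurs_at X P j -> occurs_at Y P j) ->
  size (occ X P) <= size (occ Y P).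
Proof.
move=> eXY sub; rewrite /occ !size_filter -eXY.
by apply: sub_count => j /sub; rewrite /occurs_at eXY.
Qed.

Lemma is_periodP P p :
  is_period P p -> forall t, t + p < size P -> at_ P t = at_ P (t + p).
Proof.
case/andP=> _ /allP hP t ht.
by apply/eqP/hP; rewrite mem_iota; lia.
Qed.

Lemma is_period_per P : is_period P (per P).
Proof. by rewrite /per; case: ex_minnP. Qed.

Lemma periodic_double P : periodic P -> (per P).*2 <= size P.
Proof. by rewrite /periodic geq_half_double. Qed.

Lemma occurs_at_set_nth_out X P i a j :
  i < size X -> ~~ (j <= i < j + size P) ->
  occurs_at (set_nth None X i a) P j = occurs_at X P j.
Proof.
move=> hi hj.
have hsz : size (set_nth None X i a) = size X by rewrite size_set_nth; lia.
have same t : t < size P -> at_ (set_nth None X i a) (j + t) = at_ X (j + t).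
  by move=> ht; rewrite /at_ nth_set_nth /=; case: eqP => //; lia.
apply/occurs_atP/occurs_atP; rewrite hsz => -[hs h]; split=> // t ht.
  by rewrite -same // h.
by rewrite same // h.
Qed.

Lemma occurs_at_set_nth_in X P i a j p :
  is_period P p -> p.*2 <= size P -> j <= i < j + size P ->
  occurs_at (set_nth None X i a) P j -> a = at_ X (i - p) \/ a = at_ X (i + p).
Proof.
move=> hper hp /andP [hji hij] /occurs_atP [_ hocc].
have p_gt0 : 0 < p by case/andP: hper.
have atX t : t < size P -> t != i - j -> at_ P t = at_ X (j + t).
  by move=> ht hti; rewrite -hocc // /at_ nth_set_nth /=; case: eqP => //; lia.
have ha : a = at_ P (i - j).
  by rewrite -hocc; [rewrite /at_ nth_set_nth /= subnKC // eqxx | lia].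
have [hright | hleft] := ltnP (i - j + p) (size P).
  by right; rewrite ha (is_periodP hper) // atX //; [congr at_ | ]; lia.
left; rewrite ha (_ : i - j = i - j - p + p); last by lia.
rewrite -(is_periodP hper) ?atX; try lia.
by congr at_; lia.
Qed.

Lemma exists_letter_notin (s : str) : size s < #|S| -> exists c : S, Some c \notin s.
Proof.
move=> hs; apply/existsP; apply: contraLR hs; rewrite negb_exists -leqNgt.
move=> /forallP /= hall.
have sub : [set: S] \subset pmap id s.
  by apply/subsetP => c _; rewrite mem_pmap map_id -[_ \in _]negbK hall.
rewrite -cardsT; apply: leq_trans (subset_leq_card sub) _.
by apply: leq_trans (card_size _) _; rewrite size_pmap count_size.
Qed.

End Occurrences.

Theorem lemma10 (S : finType) (T T' P : seq (option S)) (i : nat) :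
  3 <= #|S| ->
  size T = size T' ->
  dH T T' = 1 ->
  i < size T ->
  at_ T i != at_ T' i ->
  at_ T' i = None ->
  periodic P ->
  size (occ T' P) < size (occ T P) ->
  count (pred1 None) (window T' i (size P)) = 1 ->
  exists c : S,
    size (occ (set_nth None T' i (Some c)) P) <= size (occ T' P).
Proof.
move=> hS hsz _ hi _ _ hper _ _.
rewrite hsz in hi.
have [c hc] := exists_letter_notin
  (s := [:: at_ T' (i - per P); at_ T' (i + per P)]) hS.
exists c; apply: size_occ_le => [|j]; first by rewrite size_set_nth; lia.
case: (boolP (j <= i < j + size P)) => hj hocc.
  have [e|e] := occurs_at_set_nth_in (is_period_per P) (periodic_double hper)
                  hj hocc;
    by rewrite e !inE eqxx ?orbT in hc.
by move: hocc; rewrite occurs_at_set_nth_out.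
Qed.
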